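(* For all $N\in\mathbb{N}$ and all $n\in\{0,1,\dots,N\}$ we have $\mathbf{1}_{\Omega^N_n}\|Y^N_n\|\le D^N_n$ pointwise on $\Omega$.
   Context: Standing setting: $T\in(0,\infty)$; $(\Omega,\mathcal{F},\mathbb{P})$ is a probability space with a normal filtration $(\mathcal{F}_t)_{t\in[0,T]}$; $d,m\in\mathbb{N}$; $W$ is an $m$-dimensional standard $(\mathcal{F}_t)$-Brownian motion; $\xi\colon\Omega\to\mathbb{R}^d$ is $\mathcal{F}_0$-measurable with $\mathbb{E}[\|\xi\|^p]<\infty$ for all $p\in[1,\infty)$. $\|\cdot\|$ is the Euclidean norm on vectors and the operator norm on matrices. $\mu\colon\mathbb{R}^d\to\mathbb{R}^d$ is $C^1$, $\sigma\colon\mathbb{R}^d\to\mathbb{R}^{d\times m}$, and there is $c\in(0,\infty)$ with $\|\mu'(x)\|\le c(1+\|x\|^c)$, $\|\sigma(x)-\sigma(y)\|\le c\|x-y\|$, $\langle x-y,\mu(x)-\mu(y)\rangle\le c\|x-y\|^2$ for all $x,y$. Let $\Delta W^N_n:=W_{(n+1)T/N}-W_{nT/N}$; tamed Euler scheme: $Y^N_0=\xi$, $Y^N_{n+1}=Y^N_n+\frac{(T/N)\mu(Y^N_n)}{1+(T/N)\|\mu(Y^N_n)\|}+\sigma(Y^N_n)\Delta W^N_n$ for $n\in\{0,\dots,N-1\}$. Let $\lambda:=(1+2c+T+\|\mu(0)\|+\|\sigma(0)\|)^4$, $\alpha^N_n:=\mathbf{1}_{\{\|Y^N_n\|\ge1\}}\big\langle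 \frac{Y^N_n}{\|Y^N_n\|},\frac{\sigma(Y^N_n)}{\|Y^N_n\|}\Delta W^N_n\big\rangle$ (defined as $0$ when $\|Y^N_n\|<1$), and $D^N_n:=(\lambda+\|\xi\|)\exp\big(\lambda+\sup_{u\in\{0,\dots,n\}}\sum_{k=u}^{n-1}[\lambda\|\Delta W^N_k\|^2+\alpha^N_k]\big)$ for $n\in\{0,\dots,N\}$ (empty sums are $0$). Let $\Omega^N_n:=\{\omega\in\Omega:\ \sup_{k\in\{0,\dots,n-1\}}D^N_k(\omega)\le N^{1/(2c)},\ \sup_{k\in\{0,\dots,n-1\}}\|\Delta W^N_k(\omega)\|\le1\}$, with $\Omega^N_0=\Omega$. *)

(* Stdlib reals (R), with MathComp's ordinals 'I_d (from boot) used only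
   as the index type of vectors/matrices, so that a vector in R^d is exactly a
   function 'I_d -> R (no junk coordinates). *)
From Stdlib Require Import Reals Lra ClassicalEpsilon.
From mathcomp Require Import all_boot.
Set Implicit Arguments. Unset Strict Implicit. Unset Printing Implicit Defensive.
Open Scope R_scope.

Definition Vec (d : nat) := 'I_d -> R.
Definition Mat (d m : nat) := 'I_d -> 'I_m -> R.

Definition vsum (d : nat) (f : 'I_d -> R) : R := foldr Rplus 0 (map f (enum 'I_d)).

Definition vadd d (u v : Vec d) : Vec d := fun i => u i + v i.
Definition vsub d (u v : Vec d) : Vec d := fun i => u i - v i.
Definition vscale d (a : R) (u : Vec d) : Vec d := fun i => a * u i.
Definition vzero d : Vec d := fun _ => 0.
Definition inner d (u v : Vec d) : R := vsum (fun i => u i * v i).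
Definition vnorm d (u : Vec d) : R := sqrt (inner u u).

Definition matvec d m (A : Mat d m) (v : Vec m) : Vec d :=
  fun i => vsum (fun j => A i j * v j).
Definition msub d m (A B : Mat d m) : Mat d m := fun i j => A i j - B i j.

Definition opnorm d m (A : Mat d m) : R :=
  epsilon (inhabits 0)
    (is_lub (fun r => exists v : Vec m, vnorm v <= 1 /\ r = vnorm (matvec A v))).

Definition rpow (x y : R) : R := if Rlt_dec 0 x then Rpower x y else 0.

Definition frechet d (f : Vec d -> Vec d) (x : Vec d) (L : Mat d d) : Prop :=
  forall eps, 0 < eps -> exists delta, 0 < delta /\
    forall h : Vec d, vnorm h < delta ->
      vnorm (vsub (vsub (f (vadd x h)) (f x)) (matvec L h)) <= eps * vnorm h.

Definition C1_with_deriv d (f : Vec d -> Vec d) (Df : Vec d -> Mat d d) : Prop :=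
  (forall x, frechet f x (Df x)) /\
  (forall x eps, 0 < eps -> exists delta, 0 < delta /\
     forall y, vnorm (vsub y x) < delta -> opnorm (msub (Df y) (Df x)) < eps).

(* sum_{k=u}^{n-1} g k  (0 if u >= n) *)
Definition sum_from_to (g : nat -> R) (u n : nat) : R :=
  foldr Rplus 0 (map g (iota u (n - u))).
Definition max_upto (f : nat -> R) (n : nat) : R :=
  foldr Rmax (f 0%N) (map f (iota 0 n.+1)).

Definition indicator (P : Prop) : R :=
  if excluded_middle_informative P then 1 else 0.

Section Scheme.
Variables (d m : nat) (mu : Vec d -> Vec d) (sigma : Vec d -> Mat d m)
          (T : R) (N : nat) (xi : Vec d) (dW : nat -> Vec m).

Fixpoint tamedY (n : nat) : Vec d :=
  match n with
  | 0 => xi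
  | n'.+1 =>
      let y := tamedY n' in
      let h := T / INR N in
      vadd (vadd y (vscale (h / (1 + h * vnorm (mu y))) (mu y)))
           (matvec (sigma y) (dW n'))
  end.
End Scheme.

Definition dW m (Omega : Type) (W : R -> Omega -> Vec m) (T : R) (N : nat)
  (omega : Omega) (k : nat) : Vec m :=
  vsub (W (INR k.+1 * T / INR N) omega) (W (INR k * T / INR N) omega).

Definition lam d m (mu : Vec d -> Vec d) (sigma : Vec d -> Mat d m) (c T : R) : R :=
  (1 + 2 * c + T + vnorm (mu (@vzero d)) + opnorm (sigma (@vzero d))) ^ 4.

Definition alphaN d m (sigma : Vec d -> Mat d m) (y : Vec d) (w : Vec m) : R :=
  if Rle_dec 1 (vnorm y) then
    inner (vscale (/ vnorm y) y) (vscale (/ vnorm y) (matvec (sigma y) w))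
  else 0.

Definition DN d m (mu : Vec d -> Vec d) (sigma : Vec d -> Mat d m) (c T : R)
  (N : nat) (xi : Vec d) (dw : nat -> Vec m) (n : nat) : R :=
  let l := lam mu sigma c T in
  let Y := tamedY mu sigma T N xi dw in
  (l + vnorm xi) *
  exp (l + max_upto (fun u => sum_from_to
          (fun k => l * vnorm (dw k) ^ 2 + alphaN sigma (Y k) (dw k)) u n) n).

(* omega \in Omega^N_n  (sup over the empty set condition is vacuous for n = 0) *)
Definition OmegaN d m (mu : Vec d -> Vec d) (sigma : Vec d -> Mat d m) (c T : R)
  (N : nat) (xi : Vec d) (dw : nat -> Vec m) (n : nat) : Prop :=
  (forall k, (k < n)%N -> DN mu sigma c T N xi dw k <= rpow (INR N) (/ (2 * c))) /\
  (forall k, (k < n)%N -> vnorm (dw k) <= 1).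

(** The norm of the tamed Euler scheme is controlled by two regimes. While
    ||Y_k|| < 1 one step cannot leave the ball of radius lambda. When
    ||Y_k|| >= 1, expanding ||Y_{k+1}||^2 and using the one-sided Lipschitz
    condition, the polynomial growth of mu (which, as long as
    ||Y_k|| <= N^(1/(2c)), makes the tamed drift O(||Y_k|| / sqrt N)) and the
    Lipschitz bound on sigma gives
    ||Y_{k+1}|| <= ||Y_k|| exp(lambda/(2N) + lambda ||dW_k||^2 + alpha_k).
    Iterating from the last time the norm was below 1 bounds ||Y_n|| by
    (lambda + ||xi||) exp(lambda n/(2N) + max_u sum_{k=u}^{n-1}
    (lambda ||dW_k||^2 + alpha_k)), which is at most D^N_n. On Omega^N_n the
    smallness assumption needed at each step follows from this very bound at
    the earlier times, since D^N_k <= N^(1/(2c)) there. *)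

From Stdlib Require Import Reals Lra Psatz FunctionalExtensionality ClassicalEpsilon.
From mathcomp Require Import all_boot.
Open Scope R_scope.

(* [vsum f] unfolds to [lsum f (enum 'I_d)]; the vector lemmas fold it that way. *)
Definition lsum {A : Type} (f : A -> R) (l : seq A) : R := foldr Rplus 0 (map f l).

Section ListSum.
Context {A : Type}.
Implicit Types (f g : A -> R) (l : seq A).

Lemma eq_lsum f g l : (forall i, f i = g i) -> lsum f l = lsum g l.
Proof. by move=> fg; elim: l => //= x l IH; rewrite /lsum /= fg -/(lsum _ _) IH. Qed.

Lemma lsumD f g l : lsum (fun i => f i + g i) l = lsum f l + lsum g l.
Proof. elim: l => [|x l IH]; rewrite /lsum /=; [lra|]; rewrite -!/(lsum _ _) IH; ring. Qed.

Lemma lsumZ k f l : lsum (fun i => k * f i) l = k * lsum f l.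
Proof. elim: l => [|x l IH]; rewrite /lsum /=; [ring|]; rewrite -!/(lsum _ _) IH; ring. Qed.

Lemma lsum_le f g l : (forall i, f i <= g i) -> lsum f l <= lsum g l.
Proof.
move=> fg; elim: l => [|x l IH]; rewrite /lsum /=; [lra|].
by rewrite -!/(lsum _ _); have := fg x; lra.
Qed.

Lemma lsum_ge0 f l : (forall i, 0 <= f i) -> 0 <= lsum f l.
Proof.
move=> f0; elim: l => [|x l IH]; rewrite /lsum /=; [lra|].
by rewrite -!/(lsum _ _); have := f0 x; lra.
Qed.
End ListSum.

Lemma pow2_le_inv x y : 0 <= y -> x ^ 2 <= y ^ 2 -> x <= y.
Proof. by move=> y0 le; apply: Rsqr_incr_0_var => //; rewrite /Rsqr; lra. Qed.

Lemma sq_le_mul_le x y : 0 <= x -> 0 <= y -> x ^ 2 <= x * y -> x <= y.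
Proof. by move=> *; nra. Qed.

Lemma exp_le_compat x y : x <= y -> exp x <= exp y.
Proof. by case=> [/exp_increasing/Rlt_le|->] //; apply: Rle_refl. Qed.

Lemma discriminant_le A B C :
  0 <= C -> (forall t, 0 <= A - 2 * t * B + t ^ 2 * C) -> B ^ 2 <= A * C.
Proof.
move=> C0 quad.
have [->|B0] := Req_dec B 0; first by have := quad 0; nra.
have [C_eq0|C_gt0] : C = 0 \/ 0 < C by lra.
- have := quad ((A + 1) / (2 * B)); rewrite C_eq0.
  have -> : 2 * ((A + 1) / (2 * B)) * B = A + 1 by field.
  lra.
- have := quad (B / C).
  have -> : A - 2 * (B / C) * B + (B / C) ^ 2 * C = (A * C - B ^ 2) / C by field; lra.
  move=> quot_ge0; have := Rmult_le_compat_r C _ _ (Rlt_le _ _ C_gt0) quot_ge0.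
  rewrite /Rdiv Rmult_assoc Rinv_l; lra.
Qed.

Section Vectors.
Context {d : nat}.
Implicit Types u v w : Vec d.

Lemma inner_comm u v : inner u v = inner v u.
Proof. by apply: eq_lsum => i; ring. Qed.

Lemma innerZl k u v : inner (vscale k u) v = k * inner u v.
Proof.
by rewrite /inner /vsum -!/(lsum _ _) -lsumZ; apply: eq_lsum => i; rewrite /vscale; ring.
Qed.

Lemma innerDl u v w : inner (vadd u v) w = inner u w + inner v w.
Proof.
by rewrite /inner /vsum -/(lsum _ _) -lsumD; apply: eq_lsum => i; rewrite /vadd; ring.
Qed.

Lemma innerBl u v w : inner (vsub u v) w = inner u w - inner v w.
Proof.
have -> : vsub u v = vadd u (vscale (-1) v).
  by apply: functional_extensionality => i; rewrite /vsub /vadd /vscale; ring.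
by rewrite innerDl innerZl; ring.
Qed.

Lemma innerDr u v w : inner u (vadd v w) = inner u v + inner u w.
Proof. by rewrite !(inner_comm u) innerDl. Qed.

Lemma innerBr u v w : inner u (vsub v w) = inner u v - inner u w.
Proof. by rewrite !(inner_comm u) innerBl. Qed.

Lemma innerZr k u v : inner u (vscale k v) = k * inner u v.
Proof. by rewrite !(inner_comm u) innerZl. Qed.

Lemma inner_ge0 u : 0 <= inner u u.
Proof. by apply: lsum_ge0 => i; nra. Qed.

Lemma vnorm_ge0 u : 0 <= vnorm u.
Proof. exact: sqrt_pos. Qed.

Lemma vnorm_sq u : vnorm u ^ 2 = inner u u.
Proof. exact: pow2_sqrt (inner_ge0 u). Qed.

Lemma inner_sq_le u v : inner u v ^ 2 <= inner u u * inner v v.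
Proof.
apply: discriminant_le; first exact: inner_ge0.
move=> t; have := inner_ge0 (vsub u (vscale t v)).
by rewrite innerBl !innerBr !innerZl !innerZr (inner_comm v u); lra.
Qed.

Lemma Rabs_inner_le u v : Rabs (inner u v) <= vnorm u * vnorm v.
Proof.
apply: pow2_le_inv; first by apply: Rmult_le_pos; apply: vnorm_ge0.
by rewrite pow2_abs Rpow_mult_distr !vnorm_sq; apply: inner_sq_le.
Qed.

Lemma inner_le u v : inner u v <= vnorm u * vnorm v.
Proof. by have := Rabs_inner_le u v; have := Rle_abs (inner u v); lra. Qed.

Lemma vnormD_sq u v : vnorm (vadd u v) ^ 2 = vnorm u ^ 2 + 2 * inner u v + vnorm v ^ 2.
Proof. by rewrite !vnorm_sq innerDl !innerDr (inner_comm v u); ring. Qed.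

Lemma vnormD u v : vnorm (vadd u v) <= vnorm u + vnorm v.
Proof.
have := vnormD_sq u v; have := inner_le u v.
by have := vnorm_ge0 u; have := vnorm_ge0 v; have := vnorm_ge0 (vadd u v); nra.
Qed.

Lemma vnormZ k u : vnorm (vscale k u) = Rabs k * vnorm u.
Proof.
rewrite /vnorm innerZl innerZr -Rmult_assoc sqrt_mult; last exact: inner_ge0.
  by rewrite -/(Rsqr k) sqrt_Rsqr_abs.
exact: Rle_0_sqr.
Qed.

Lemma vnorm_le_subD u v : vnorm u <= vnorm (vsub u v) + vnorm v.
Proof.
rewrite {1}(_ : u = vadd (vsub u v) v); first exact: vnormD.
by apply: functional_extensionality => i; rewrite /vadd /vsub; ring.
Qed.

Lemma vnorm0 : vnorm (@vzero d) = 0.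
Proof.
rewrite /vnorm (_ : inner _ _ = 0) ?sqrt_0 //.
by rewrite /inner /vsum /vzero; elim: (enum _) => //= _ l ->; ring.
Qed.

Lemma vsub0 u : vsub u (@vzero d) = u.
Proof. by apply: functional_extensionality => i; rewrite /vsub /vzero; ring. Qed.

Lemma vscaleD s t u : vadd (vscale s u) (vscale t u) = vscale (s + t) u.
Proof. by apply: functional_extensionality => i; rewrite /vadd /vscale; ring. Qed.
End Vectors.

Section Matrices.
Context {d m : nat}.
Implicit Types (A B : Mat d m) (v : Vec m).

Lemma matvecZ A k v : matvec A (vscale k v) = vscale k (matvec A v).
Proof. by apply: functional_extensionality => i; apply: innerZr. Qed.

Lemma matvecB A B v : matvec (msub A B) v = vsub (matvec A v) (matvec B v).
Proof. by apply: functional_extensionality => i; apply: innerBl. Qed.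

Definition frobenius_sq A : R := vsum (fun i => inner (A i) (A i)).

Lemma vnorm_matvec_le_frobenius A v :
  vnorm (matvec A v) <= sqrt (frobenius_sq A) * vnorm v.
Proof.
have F0 : 0 <= frobenius_sq A by apply: lsum_ge0 => i; apply: inner_ge0.
have sq_le : vnorm (matvec A v) ^ 2 <= frobenius_sq A * vnorm v ^ 2.
  rewrite !vnorm_sq /frobenius_sq /vsum -!/(lsum _ _) Rmult_comm -lsumZ.
  apply: lsum_le => i; have := inner_sq_le (A i) v.
  by change (matvec A v i) with (inner (A i) v); lra.
apply: pow2_le_inv; first by apply: Rmult_le_pos; [apply: sqrt_pos|apply: vnorm_ge0].
by rewrite Rpow_mult_distr pow2_sqrt.
Qed.

Definition opnorm_set A (r : R) : Prop :=
  exists v, vnorm v <= 1 /\ r = vnorm (matvec A v).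

(* The Frobenius bound shows that the supremum defining [opnorm] exists, so
   the choice operator in its definition picks the least upper bound. *)
Lemma opnorm_is_lub A : is_lub (opnorm_set A) (opnorm A).
Proof.
rewrite /opnorm; apply: epsilon_spec.
have [x lub_x] : {x | is_lub (opnorm_set A) x}; last by exists x.
apply: completeness.
- exists (sqrt (frobenius_sq A)) => _ [v [v_le1 ->]].
  have := vnorm_matvec_le_frobenius A v; have := sqrt_pos (frobenius_sq A).
  by have := vnorm_ge0 v; nra.
- by exists (vnorm (matvec A (@vzero m))), (@vzero m); rewrite vnorm0; split; [lra|].
Qed.

Lemma opnorm_ge0 A : 0 <= opnorm A.
Proof.
have [ub _] := opnorm_is_lub A.
apply: Rle_trans (vnorm_ge0 (matvec A (@vzero m))) _; apply: ub.
by exists (@vzero m); rewrite vnorm0; split; [lra|].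
Qed.

Lemma vnorm_matvec_le A v : vnorm (matvec A v) <= opnorm A * vnorm v.
Proof.
have [ub _] := opnorm_is_lub A.
have [v0|v_gt0] : vnorm v = 0 \/ 0 < vnorm v by have := vnorm_ge0 v; lra.
  have := vnorm_matvec_le_frobenius A v; have := vnorm_ge0 (matvec A v).
  by rewrite v0; lra.
have inv_gt0 : 0 < / vnorm v by apply: Rinv_0_lt_compat.
have unit_le : opnorm_set A (/ vnorm v * vnorm (matvec A v)).
  exists (vscale (/ vnorm v) v); rewrite matvecZ !vnormZ Rabs_pos_eq; last lra.
  by rewrite Rinv_l; [split; lra|lra].
have := Rmult_le_compat_r (vnorm v) _ _ (Rlt_le _ _ v_gt0) (ub _ unit_le).
by rewrite Rmult_comm -Rmult_assoc Rinv_r; lra.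
Qed.
End Matrices.

Lemma rpow_ge0 x y : 0 <= rpow x y.
Proof. by rewrite /rpow; case: (Rlt_dec 0 x) => /= _; [apply: Rlt_le; apply: exp_pos|lra]. Qed.

Lemma rpow_le_l x y c : 0 <= x <= y -> 0 <= c -> rpow x c <= rpow y c.
Proof.
move=> [x0 xy] c0; rewrite /rpow.
case: (Rlt_dec 0 x) => /= x_gt0; case: (Rlt_dec 0 y) => /= y_gt0; try lra.
- exact: Rle_Rpower_l.
- by apply: Rlt_le; apply: exp_pos.
Qed.

Lemma rpow_1_l c : rpow 1 c = 1.
Proof.
rewrite /rpow; case: (Rlt_dec 0 1) => /= [_|]; last lra.
by rewrite /Rpower ln_1 Rmult_0_r exp_0.
Qed.

Lemma rpow_rpow_inv2 x c : 0 < x -> 0 < c -> rpow (rpow x (/ (2 * c))) c = sqrt x.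
Proof.
move=> x_gt0 c_gt0; rewrite /rpow; case: (Rlt_dec 0 x) => //= _.
case: (Rlt_dec 0 _) => /= [_|]; last by case; apply: exp_pos.
by rewrite Rpower_mult (_ : / (2 * c) * c = / 2) ?Rpower_sqrt //; field; lra.
Qed.

Section MeanValue.
Context {d : nat}.
Implicit Types (f : Vec d -> Vec d) (e y : Vec d).

Lemma frechet_ray_derivable f L e y t :
  frechet f (vscale t y) L ->
  derivable_pt_lim (fun s => inner e (f (vscale s y))) t (inner e (matvec L y)).
Proof.
move=> fr eps eps_gt0.
have y0 := vnorm_ge0 y; have e0 := vnorm_ge0 e.
set K := vnorm e * vnorm y + 1; set q := eps / (2 * K).
have K_gt0 : 0 < K by rewrite /K; nra.
have q_gt0 : 0 < q by apply: Rdiv_lt_0_compat; lra.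
have [del [del_gt0 rem]] := fr q q_gt0.
have del'_gt0 : 0 < del / (vnorm y + 1) by apply: Rdiv_lt_0_compat; lra.
exists (mkposreal _ del'_gt0) => h h_neq0 /= h_small.
have h_gt0 : 0 < Rabs h by apply: Rabs_pos_lt.
have hy_small : vnorm (vscale h y) < del.
  have := Rmult_lt_compat_r (vnorm y + 1) _ _ ltac:(lra) h_small.
  by rewrite vnormZ /Rdiv Rmult_assoc Rinv_l; nra.
have := rem _ hy_small; rewrite vnormZ vscaleD; set R := vsub _ _ => R_le.
have -> : (inner e (f (vscale (t + h) y)) - inner e (f (vscale t y))) / h
          - inner e (matvec L y) = inner e R / h.
  by rewrite /R !innerBr matvecZ innerZr; field.
rewrite /Rdiv Rabs_mult Rabs_inv; apply: (Rmult_lt_reg_r (Rabs h)) => //.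
rewrite Rmult_assoc Rinv_l; last lra.
have qK : q * (vnorm e * vnorm y) <= eps / 2.
  rewrite (_ : eps / 2 = q * K); last by rewrite /q; field; lra.
  by apply: Rmult_le_compat_l; [lra|rewrite /K; lra].
have := Rmult_le_compat_l _ _ _ (Rlt_le _ _ h_gt0) qK.
have := Rabs_inner_le e R; have := Rmult_le_compat_l _ _ _ e0 R_le.
by move=> *; nra.
Qed.

Lemma frechet_mean_value f Df y :
  (forall x, frechet f x (Df x)) ->
  exists t, 0 < t < 1 /\
    vnorm (vsub (f y) (f (@vzero d))) <= opnorm (Df (vscale t y)) * vnorm y.
Proof.
move=> fr; set e := vsub (f y) (f (@vzero d)).
have [t [mvt t01]] := MVT_cor2 (fun s => inner e (f (vscale s y)))
  (fun s => inner e (matvec (Df (vscale s y)) y)) 0 1 Rlt_0_1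
  (fun s _ => frechet_ray_derivable f _ e y s (fr (vscale s y))).
exists t; split => //.
have scale1 : vscale 1 y = y.
  by apply: functional_extensionality => i; rewrite /vscale; ring.
have scale0 : vscale 0 y = @vzero d.
  by apply: functional_extensionality => i; rewrite /vscale /vzero; ring.
rewrite /= scale1 scale0 -innerBr -/e -vnorm_sq Rminus_0_r Rmult_1_r in mvt.
apply: sq_le_mul_le; first exact: vnorm_ge0.
  by apply: Rmult_le_pos; [apply: opnorm_ge0|apply: vnorm_ge0].
rewrite mvt; apply: Rle_trans (inner_le _ _) _.
by apply: Rmult_le_compat_l; [apply: vnorm_ge0|apply: vnorm_matvec_le].
Qed.

Lemma vnorm_sub0_le_of_opnorm_deriv f Df c : 0 <= c ->
  (forall x, frechet f x (Df x)) ->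
  (forall x, opnorm (Df x) <= c * (1 + rpow (vnorm x) c)) ->
  forall y, vnorm (vsub (f y) (f (@vzero d))) <= c * (1 + rpow (vnorm y) c) * vnorm y.
Proof.
move=> c0 fr Df_le y; have [t [t01 mv]] := frechet_mean_value f Df y fr.
apply: Rle_trans mv _; apply: Rmult_le_compat_r; first exact: vnorm_ge0.
apply: Rle_trans (Df_le _) _; apply: Rmult_le_compat_l => //.
apply: Rplus_le_compat_l; apply: rpow_le_l => //; rewrite vnormZ Rabs_pos_eq; last lra.
by have := vnorm_ge0 y; split; nra.
Qed.
End MeanValue.

(* The only two places where the particular value of lambda matters. *)
Lemma small_step_const_le T a b c : 0 <= T -> 0 <= a -> 0 <= b -> 0 <= c ->
  1 + T * (a + 2 * c) + (b + c) <= (1 + 2 * c + T + a + b) ^ 4.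
Proof.
move=> T0 a0 b0 c0; set x := 2 * c + T + a + b.
have G_le : T * (a + 2 * c) <= x * x by apply: Rmult_le_compat; rewrite /x; lra.
have Z_le : b + c <= x by rewrite /x; lra.
have x0 : 0 <= x by rewrite /x; lra.
have -> : 1 + 2 * c + T + a + b = 1 + x by rewrite /x; ring.
have -> : (1 + x) ^ 4 = 1 + 4 * x + 6 * (x * x) + 4 * x ^ 3 + x ^ 4 by ring.
by have := pow_le x 3 x0; have := pow_le x 4 x0; have := Rmult_le_pos x x x0 x0; lra.
Qed.

Lemma large_step_const_le T a b c : 0 <= T -> 0 <= a -> 0 <= b -> 0 <= c ->
  2 * T * (c + a) + 2 * (T * (a + 2 * c)) ^ 2 <= (1 + 2 * c + T + a + b) ^ 4 /\
  (b + c) ^ 2 <= (1 + 2 * c + T + a + b) ^ 4.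
Proof.
move=> T0 a0 b0 c0; set L := 1 + 2 * c + T + a + b.
have L1 : 1 <= L by rewrite /L; lra.
have G0 : 0 <= T * (a + 2 * c) by nra.
have G_le : T * (a + 2 * c) <= L ^ 2 / 4.
  by have := pow2_ge_0 (T - (a + 2 * c)); rewrite /L; nra.
have Z_le : b + c <= L by rewrite /L; lra.
have drift_le : T * (c + a) <= T * (a + 2 * c) by nra.
clearbody L; have L2 : 1 <= L ^ 2 by nra.
rewrite (_ : L ^ 4 = L ^ 2 * L ^ 2); last by ring.
split; nra.
Qed.

Section TamedStep.
Context {d m : nat}.
Variables (mu : Vec d -> Vec d) (sigma : Vec d -> Mat d m) (T c : R) (N : nat).
Hypotheses (T_gt0 : 0 < T) (c_gt0 : 0 < c) (N_gt0 : (0 < N)%N).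
Hypothesis mu_growth :
  forall y, vnorm (vsub (mu y) (mu (@vzero d))) <= c * (1 + rpow (vnorm y) c) * vnorm y.
Hypothesis sigma_lipschitz :
  forall x y, opnorm (msub (sigma x) (sigma y)) <= c * vnorm (vsub x y).
Hypothesis mu_one_sided :
  forall x y, inner (vsub x y) (vsub (mu x) (mu y)) <= c * vnorm (vsub x y) ^ 2.

Let a := vnorm (mu (@vzero d)).
Let b := opnorm (sigma (@vzero d)).
Let h := T / INR N.
Let taming y := h / (1 + h * vnorm (mu y)).

Definition tamed_step (y : Vec d) (w : Vec m) : Vec d :=
  vadd (vadd y (vscale (taming y) (mu y))) (matvec (sigma y) w).

Lemma lam_ge1 : 1 <= lam mu sigma c T.
Proof.
apply: pow_R1_Rle.
by have := vnorm_ge0 (mu (@vzero d)); have := opnorm_ge0 (sigma (@vzero d)); lra.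
Qed.

Lemma INR_N_ge1 : 1 <= INR N.
Proof. by apply: (le_INR 1); apply/leP. Qed.

Lemma taming_bounds y : 0 <= taming y <= h.
Proof.
have h_gt0 : 0 < h by apply: Rdiv_lt_0_compat; have := INR_N_ge1; lra.
have := vnorm_ge0 (mu y); rewrite /taming => M0.
split; first by apply: Rlt_le; apply: Rdiv_lt_0_compat; nra.
apply: (Rmult_le_reg_r (1 + h * vnorm (mu y))); first nra.
by rewrite /Rdiv Rmult_assoc Rinv_l; nra.
Qed.

Lemma vnorm_mu_le y : vnorm (mu y) <= a + c * (1 + rpow (vnorm y) c) * vnorm y.
Proof.
by have := vnorm_le_subD (mu y) (mu (@vzero d)); have := mu_growth y; rewrite /a; lra.
Qed.

Lemma vnorm_sigma_le y w : vnorm (matvec (sigma y) w) <= (b + c * vnorm y) * vnorm w.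
Proof.
have := vnorm_le_subD (matvec (sigma y) w) (matvec (sigma (@vzero d)) w).
rewrite -matvecB.
have := vnorm_matvec_le (msub (sigma y) (sigma (@vzero d))) w.
have := vnorm_matvec_le (sigma (@vzero d)) w.
have := Rmult_le_compat_r _ _ _ (vnorm_ge0 w) (sigma_lipschitz y (@vzero d)).
by rewrite vsub0 -/b; lra.
Qed.

Lemma tamed_step_small y w :
  vnorm y < 1 -> vnorm w <= 1 -> vnorm (tamed_step y w) <= lam mu sigma c T.
Proof.
move=> y_lt1 w_le1.
have r0 := vnorm_ge0 y; have M0 := vnorm_ge0 (mu y); have b0 : 0 <= b by apply: opnorm_ge0.
have rc_le1 : rpow (vnorm y) c <= 1 by rewrite -(rpow_1_l c); apply: rpow_le_l; lra.
have rc0 := rpow_ge0 (vnorm y) c.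
have M_le : vnorm (mu y) <= a + 2 * c.
  have : (1 + rpow (vnorm y) c) * vnorm y <= 2 by nra.
  move/(Rmult_le_compat_l c _ _ (Rlt_le _ _ c_gt0)).
  by have := vnorm_mu_le y; rewrite Rmult_assoc; lra.
have [p0 p_le] := taming_bounds y.
have h_le : h <= T.
  rewrite /h /Rdiv -{2}(Rmult_1_r T); apply: Rmult_le_compat_l; first lra.
  by rewrite -Rinv_1; apply: Rinv_le_contravar; [lra|apply: INR_N_ge1].
have pM_le : taming y * vnorm (mu y) <= T * (a + 2 * c).
  by apply: Rmult_le_compat => //; lra.
have s_le : vnorm (matvec (sigma y) w) <= b + c.
  have w0 := vnorm_ge0 w; apply: Rle_trans (vnorm_sigma_le y w) _.
  rewrite -[X in _ <= X]Rmult_1_r; apply: Rmult_le_compat; nra.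
have := vnormD (vadd y (vscale (taming y) (mu y))) (matvec (sigma y) w).
have := vnormD y (vscale (taming y) (mu y)); rewrite vnormZ Rabs_pos_eq //.
have := small_step_const_le T a b c (Rlt_le _ _ T_gt0) (vnorm_ge0 _) b0 (Rlt_le _ _ c_gt0).
by rewrite /tamed_step /lam -/a -/b; lra.
Qed.

Section LargeState.
Variables (y : Vec d) (w : Vec m).
Hypotheses (y_ge1 : 1 <= vnorm y) (y_pow_le : rpow (vnorm y) c <= sqrt (INR N)).

Lemma taming_drift_le :
  taming y * vnorm (mu y) <= T * (a + 2 * c) * vnorm y / sqrt (INR N).
Proof.
have sN_ge1 : 1 <= sqrt (INR N) by rewrite -sqrt_1; apply: sqrt_le_1_alt; apply: INR_N_ge1.
have sN_sq : sqrt (INR N) * sqrt (INR N) = INR N by apply: sqrt_sqrt; have := INR_N_ge1; lra.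
have a0 : 0 <= a by apply: vnorm_ge0.
have cr0 := Rmult_le_pos _ _ (Rlt_le _ _ c_gt0) (vnorm_ge0 y).
have M_le : vnorm (mu y) <= (a + 2 * c) * vnorm y * sqrt (INR N).
  have := Rmult_le_compat_l _ _ _ cr0 y_pow_le; have := vnorm_mu_le y.
  have := Rmult_le_compat_l a 1 (vnorm y * sqrt (INR N)) a0 ltac:(nra).
  have := Rmult_le_compat_l _ 1 _ cr0 sN_ge1.
  by move=> *; nra.
have [_ p_le] := taming_bounds y.
apply: Rle_trans (Rmult_le_compat_r _ _ _ (vnorm_ge0 _) p_le) _.
apply: Rle_trans (Rmult_le_compat_l _ _ _ _ M_le) _.
  by apply: Rlt_le; apply: Rdiv_lt_0_compat; have := INR_N_ge1; lra.
by rewrite /h -{1}sN_sq; apply: Req_le; field; lra.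
Qed.

Lemma taming_inner_le : taming y * inner y (mu y) <= T * (c + a) * vnorm y ^ 2 / INR N.
Proof.
have a0 : 0 <= a by apply: vnorm_ge0.
have ymu_le : inner y (mu y) <= (c + a) * vnorm y ^ 2.
  have := mu_one_sided y (@vzero d); rewrite !vsub0 innerBr.
  have := inner_le y (mu (@vzero d)); rewrite -/a.
  have r_le : vnorm y <= vnorm y ^ 2 by nra.
  by have := Rmult_le_compat_l a _ _ a0 r_le; move=> *; nra.
have [p0 p_le] := taming_bounds y.
apply: Rle_trans (Rmult_le_compat_l _ _ _ p0 ymu_le) _.
rewrite (_ : _ / INR N = h * ((c + a) * vnorm y ^ 2)); last first.
  by rewrite /h; field; have := INR_N_ge1; lra.
apply: Rmult_le_compat_r => //; apply: Rmult_le_pos; [lra|exact: pow2_ge_0].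
Qed.

Lemma inner_sigma_alphaN : inner y (matvec (sigma y) w) = vnorm y ^ 2 * alphaN sigma y w.
Proof.
rewrite /alphaN; case: Rle_dec => //= _.
by rewrite innerZl innerZr; field; lra.
Qed.

Lemma vnorm_increment_le :
  vnorm (vadd (vscale (taming y) (mu y)) (matvec (sigma y) w))
    <= vnorm y * (T * (a + 2 * c) / sqrt (INR N) + (b + c) * vnorm w).
Proof.
have [p0 _] := taming_bounds y.
have s_le : vnorm (matvec (sigma y) w) <= (b + c) * vnorm y * vnorm w.
  apply: Rle_trans (vnorm_sigma_le y w) _; apply: Rmult_le_compat_r; first exact: vnorm_ge0.
  have b0 : 0 <= b by apply: opnorm_ge0.
  nra.
have := vnormD (vscale (taming y) (mu y)) (matvec (sigma y) w).
have := taming_drift_le; rewrite vnormZ Rabs_pos_eq // /Rdiv.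
by move=> *; lra.
Qed.

Lemma tamed_step_sq_le :
  vnorm (tamed_step y w) ^ 2 <= vnorm y ^ 2 *
    (1 + lam mu sigma c T / INR N + 2 * lam mu sigma c T * vnorm w ^ 2
       + 2 * alphaN sigma y w).
Proof.
set v := vadd (vscale (taming y) (mu y)) (matvec (sigma y) w).
have -> : tamed_step y w = vadd y v.
  by apply: functional_extensionality => i; rewrite /tamed_step /v /vadd; ring.
rewrite vnormD_sq /v innerDr innerZr inner_sigma_alphaN -/v.
set G := T * (a + 2 * c); set Z := b + c; set sN := sqrt (INR N).
have INR_N_gt0 : 0 < INR N by have := INR_N_ge1; lra.
have v_sq_le : vnorm v ^ 2 <= vnorm y ^ 2 * (2 * G ^ 2 / INR N + 2 * Z ^ 2 * vnorm w ^ 2).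
  have sN_sq : sN ^ 2 = INR N by apply: pow2_sqrt; lra.
  have sN_gt0 : 0 < sN by apply: sqrt_lt_R0.
  have := pow_incr _ _ 2 (conj (vnorm_ge0 v) vnorm_increment_le).
  move/Rle_trans; apply; rewrite -/G -/Z -/sN Rpow_mult_distr.
  apply: Rmult_le_compat_l; first exact: pow2_ge_0.
  rewrite -sN_sq (_ : 2 * G ^ 2 / sN ^ 2 = 2 * (G / sN) ^ 2); last by field; lra.
  by have := pow2_ge_0 (G / sN - Z * vnorm w); nra.
have [drift_le diff_le] := large_step_const_le T a b c (Rlt_le _ _ T_gt0)
  (vnorm_ge0 _) (opnorm_ge0 _) (Rlt_le _ _ c_gt0).
rewrite /lam -/a -/b -/G -/Z in drift_le diff_le *.
set lm := (1 + 2 * c + T + a + b) ^ 4 in drift_le diff_le *.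
have yN0 : 0 <= vnorm y ^ 2 / INR N.
  by apply: Rmult_le_pos; [apply: pow2_ge_0|apply/Rlt_le/Rinv_0_lt_compat].
have yw0 : 0 <= 2 * vnorm y ^ 2 * vnorm w ^ 2.
  by have := pow2_ge_0 (vnorm y); have := pow2_ge_0 (vnorm w); nra.
have := Rmult_le_compat_r _ _ _ yN0 drift_le.
have := Rmult_le_compat_r _ _ _ yw0 diff_le.
by have := taming_inner_le; move=> *; lra.
Qed.

Lemma tamed_step_large :
  vnorm (tamed_step y w) <= vnorm y *
    exp (lam mu sigma c T / (2 * INR N) + (lam mu sigma c T * vnorm w ^ 2
         + alphaN sigma y w)).
Proof.
set E := _ + _.
apply: pow2_le_inv; first by apply: Rmult_le_pos; [lra|apply/Rlt_le/exp_pos].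
apply: Rle_trans tamed_step_sq_le _.
have -> : (vnorm y * exp E) ^ 2 = vnorm y ^ 2 * exp (2 * E).
  by rewrite Rpow_mult_distr /= !Rmult_1_r -exp_plus; do 2 f_equal; ring.
apply: Rmult_le_compat_l; first exact: pow2_ge_0.
apply: Rle_trans (exp_ineq1_le _); apply: Req_le; rewrite /E; field.
by have := INR_N_ge1; lra.
Qed.
End LargeState.

Lemma tamed_step_reset_or_grow y w :
  vnorm w <= 1 -> vnorm y <= rpow (INR N) (/ (2 * c)) ->
  vnorm (tamed_step y w) <= lam mu sigma c T \/
  vnorm (tamed_step y w) <= vnorm y *
    exp (lam mu sigma c T / (2 * INR N) + (lam mu sigma c T * vnorm w ^ 2
         + alphaN sigma y w)).
Proof.
move=> w_le1 y_le; case: (Rlt_dec (vnorm y) 1) => [y_lt1|/Rnot_lt_le y_ge1].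
  by left; apply: tamed_step_small.
right; apply: tamed_step_large => //.
have N_pos : 0 < INR N by have := INR_N_ge1; lra.
rewrite -(rpow_rpow_inv2 _ _ N_pos c_gt0); apply: rpow_le_l; last lra.
by split; first exact: vnorm_ge0.
Qed.
End TamedStep.

Lemma foldr_Rmax_ge (f : nat -> R) x0 l u : u \in l -> f u <= foldr Rmax x0 (map f l).
Proof.
elim: l => //= k l IH; rewrite in_cons => /orP [/eqP ->|/IH].
- exact: Rmax_l.
- by move/Rle_trans; apply; apply: Rmax_r.
Qed.

Lemma foldr_Rmax_attained (f : nat -> R) x0 l :
  foldr Rmax x0 (map f l) = x0 \/ exists2 u, u \in l & foldr Rmax x0 (map f l) = f u.
Proof.
elim: l => [|k l IH] /=; first by left.
case: (Rle_dec (f k) (foldr Rmax x0 (map f l))) => [le|/Rnot_le_lt lt].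
- rewrite Rmax_right //; case: IH => [->|[u u_in ->]]; first by left.
  by right; exists u => //; rewrite in_cons u_in orbT.
- by rewrite Rmax_left; [right; exists k; rewrite ?in_cons ?eqxx|lra].
Qed.

Lemma max_upto_ge f n u : (u <= n)%N -> f u <= max_upto f n.
Proof. by move=> le_un; apply: foldr_Rmax_ge; rewrite mem_iota. Qed.

Lemma max_upto_attained f n : exists2 u, (u <= n)%N & max_upto f n = f u.
Proof.
rewrite /max_upto.
case: (foldr_Rmax_attained f (f 0%N) (iota 0 n.+1)) => [->|[u]]; first by exists 0%N.
by rewrite mem_iota; exists u.
Qed.

Lemma sum_from_to_nil g n : sum_from_to g n n = 0.
Proof. by rewrite /sum_from_to subnn. Qed.

Lemma sum_from_to_S g u n : (u <= n)%N -> sum_from_to g u n.+1 = sum_from_to g u n + g n.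
Proof.
move=> le_un; rewrite /sum_from_to subSn // -addn1 iotaD map_cat foldr_cat subnKC //=.
by elim: (map g _) => /= [|x l ->]; ring.
Qed.

Definition max_suffix_sum (g : nat -> R) (n : nat) : R :=
  max_upto (fun u => sum_from_to g u n) n.

Lemma max_suffix_sum_ge0 g n : 0 <= max_suffix_sum g n.
Proof.
by rewrite -(sum_from_to_nil g n); apply: (max_upto_ge (fun u => sum_from_to g u n)).
Qed.

Lemma max_suffix_sumS g n : max_suffix_sum g n + g n <= max_suffix_sum g n.+1.
Proof.
rewrite /max_suffix_sum.
have [u le_un ->] := max_upto_attained (fun u => sum_from_to g u n) n.
rewrite -sum_from_to_S //; apply: (max_upto_ge (fun u => sum_from_to g u n.+1)).
exact: leqW.
Qed.

Lemma reset_or_grow_bound (y g : nat -> R) (K eps : R) (n : nat) :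
  0 <= K -> 0 <= eps -> y 0%N <= K ->
  (forall k, (k < n)%N -> y k <= K * exp (INR k * eps + max_suffix_sum g k) ->
     y k.+1 <= K \/ y k.+1 <= y k * exp (eps + g k)) ->
  y n <= K * exp (INR n * eps + max_suffix_sum g n).
Proof.
move=> K0 eps0 y0 step.
have exp_ge1 k : 1 <= exp (INR k * eps + max_suffix_sum g k).
  rewrite -exp_0; apply: exp_le_compat.
  by have := max_suffix_sum_ge0 g k; have := pos_INR k; nra.
elim: n step => [|k IH] step; first by have := exp_ge1 0%N; nra.
have {}IH := IH (fun j lt_jk => step j (ltnW lt_jk)).
case: (step k (ltnSn k) IH) => [reset|grow]; first by have := exp_ge1 k.+1; nra.
apply: Rle_trans grow _.
apply: Rle_trans (Rmult_le_compat_r _ _ _ (Rlt_le _ _ (exp_pos _)) IH) _.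
rewrite Rmult_assoc -exp_plus; apply: Rmult_le_compat_l => //.
have := max_suffix_sumS g k; rewrite S_INR => ?.
by apply: exp_le_compat; lra.
Qed.

Lemma INR_mul_half_div_le k N x : (k <= N)%N -> (0 < N)%N -> 0 <= x ->
  INR k * (x / (2 * INR N)) <= x.
Proof.
move=> /leP/le_INR k_le /ltP/lt_0_INR N_pos x0.
have x2N0 : 0 <= x / (2 * INR N) by apply: Rmult_le_pos; [|apply/Rlt_le/Rinv_0_lt_compat]; lra.
apply: Rle_trans (Rmult_le_compat_r _ _ _ x2N0 k_le) _.
by rewrite (_ : _ * _ = x / 2); [lra|field; lra].
Qed.

Theorem lemma3p1 (d m : nat) (T c : R) (mu : Vec d -> Vec d) (sigma : Vec d -> Mat d m)
  (Omega : Type) (W : R -> Omega -> Vec m) (xi : Omega -> Vec d) :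
  (0 < d)%N -> (0 < m)%N -> 0 < T -> 0 < c ->
  (exists Dmu : Vec d -> Mat d d, C1_with_deriv mu Dmu /\
     forall x, opnorm (Dmu x) <= c * (1 + rpow (vnorm x) c)) ->
  (forall x y, opnorm (msub (sigma x) (sigma y)) <= c * vnorm (vsub x y)) ->
  (forall x y, inner (vsub x y) (vsub (mu x) (mu y)) <= c * vnorm (vsub x y) ^ 2) ->
  forall (N n : nat), (0 < N)%N -> (n <= N)%N ->
  forall omega : Omega,
    indicator (OmegaN mu sigma c T N (xi omega) (dW W T N omega) n)
      * vnorm (tamedY mu sigma T N (xi omega) (dW W T N omega) n)
    <= DN mu sigma c T N (xi omega) (dW W T N omega) n.
Proof.
move=> _ _ T_gt0 c_gt0 [Dmu [[fr _] Dmu_le]] sigma_lip mu_os N n N_gt0 le_nN omega.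
have mu_growth := vnorm_sub0_le_of_opnorm_deriv mu Dmu c (Rlt_le _ _ c_gt0) fr Dmu_le.
set x0 := xi omega; set w := dW W T N omega; set Y := tamedY mu sigma T N x0 w.
set lm := lam mu sigma c T; set K := lm + vnorm x0; set eps := lm / (2 * INR N).
set g := fun k => lm * vnorm (w k) ^ 2 + alphaN sigma (Y k) (w k).
have lm_ge0 : 0 <= lm by have := lam_ge1 mu sigma T c T_gt0 c_gt0; rewrite -/lm; lra.
have lm_le_K : lm <= K by have := vnorm_ge0 x0; rewrite /K; lra.
have bound_le_DN k : (k <= N)%N ->
    K * exp (INR k * eps + max_suffix_sum g k) <= DN mu sigma c T N x0 w k.
  move=> le_kN; change (DN _ _ _ _ _ _ _ k) with (K * exp (lm + max_suffix_sum g k)).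
  apply: Rmult_le_compat_l; first lra; apply: exp_le_compat.
  by have := INR_mul_half_div_le _ _ _ le_kN N_gt0 lm_ge0; rewrite -/eps; lra.
rewrite /indicator; case: excluded_middle_informative => /= [[D_le w_le1]|_]; last first.
  by rewrite Rmult_0_l; apply: Rle_trans (bound_le_DN n le_nN); apply: Rmult_le_pos;
    [lra|apply/Rlt_le/exp_pos].
rewrite Rmult_1_l; apply: Rle_trans (bound_le_DN n le_nN).
apply: (reset_or_grow_bound (fun k => vnorm (Y k))) => [|||k lt_kn]; cbv beta.
- lra.
- have N_pos : 0 < INR N by apply: lt_0_INR; apply/ltP.
  by apply: Rmult_le_pos; [|apply/Rlt_le/Rinv_0_lt_compat]; lra.
- by change (vnorm x0 <= K); have := vnorm_ge0 x0; rewrite /K; lra.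
move=> Yk_le; have Yk_small : vnorm (Y k) <= rpow (INR N) (/ (2 * c)).
  have le_kN : (k <= N)%N := ltnW (leq_trans lt_kn le_nN).
  by have := bound_le_DN k le_kN; have := D_le k lt_kn; lra.
change (Y k.+1) with (tamed_step mu sigma T N (Y k) (w k)).
case: (tamed_step_reset_or_grow mu sigma T c N T_gt0 c_gt0 N_gt0 mu_growth sigma_lip mu_os
  _ _ (w_le1 k lt_kn) Yk_small) => [reset|grow]; last by right; exact: grow.
by left; rewrite -/lm in reset; lra.
Qed.
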